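(* There exist a financial system $S$ in the base model (all contracts of the same priority), banks $u\neq v$ and a number $x>0$ such that: $S$ has exactly one solution $r$; the system $S'$ obtained from $S$ by replacing $e_u$ with $e_u+x$ (everything else unchanged) has exactly one solution $r'$; and $q'_v(r')>q_v(r)+x$, where $q_v$ and $q'_v$ denote the payoff of $v$ in $S$ and $S'$, respectively.
   Context: A financial system with payment priorities consists of: a finite set $V$ of banks; external assets $e_v\ge 0$ for each $v\in V$; a number $P\ge 1$ of priority levels; and a finite set of contracts, each of which is either a debt contract from a debtor $u$ to a creditor $v\neq u$ with weight $c>0$, or a credit default swap (CDS) from a debtor $u$ to a creditor $v\neq u$ in reference to a bank $w\notin\{u,v\}$ (the reference entity) with weight $c>0$. Every contract has a priority in $\{1,\dots,P\}$ (1 is the highest priority). It is assumed that every bank that is the reference entity of some CDS is the debtor of at least one debt contract of positive weight. Given a recovery rate vector $r\in[0,1]^V$: the liability of a contract $k$ is $l_k(r)=c$ if $k$ is a debt of weight $c$, and $l_k(r)=c\,(1-r_w)$ if $k$ is a CDS of weight $c$ in reference to $w$. For a bank $v$, $l_v(r)$ is the sum of the liabilities of the contracts with debtor $v$; $l_v^{(\rho)}(r)$ is the sum of the liabilities of contracts with debtor $v$ and priority $\rho$; and $l_v^{(\le\rho)}(r)=\sum_{i=1}^{\rho}l_v^{(i)}(r)$ (with $l_v^{(\le 0)}=0$). The payment on a contract $k$ with debtor $v$ and priority $\rho$ is $p_k(r)=l_k(r)\cdot\min\{1,\max\{0,(r_v l_v(r)-l_v^{(\le\rho-1)}(r))/l_v^{(\rho)}(r)\}\}$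 (and $p_k(r)=0$ if $l_v^{(\rho)}(r)=0$). The assets of $v$ are $a_v(r)=e_v+\sum_k p_k(r)$, summing over contracts $k$ with creditor $v$. A vector $r\in[0,1]^V$ is a solution (clearing vector) if for every $v\in V$: $r_v=1$ when $a_v(r)\ge l_v(r)$, and $r_v=a_v(r)/l_v(r)$ when $a_v(r)<l_v(r)$. The payoff of $v$ is $q_v(r)=\max\{a_v(r)-l_v(r),0\}$. When $P=1$, payments reduce to $p_k(r)=r_v\,l_k(r)$ (principle of proportionality); this is called the base model. *)

From Stdlib Require Import Reals List.
Import ListNotations.
Open Scope R_scope.

(* Banks are the natural numbers 0 .. nbanks-1. *)
Inductive ckind : Type :=
  | Debt : ckind
  | CDS : nat -> ckind.          (* CDS in reference to the given bank *)

Record contract : Type := mkContract {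
  debtor : nat;
  creditor : nat;
  weight : R;
  kind : ckind;
  prio : nat }.

Record system : Type := mkSystem {
  nbanks : nat;
  ext : nat -> R;
  nprio : nat;
  contracts : list contract }.

Definition sumR (l : list R) : R := fold_right Rplus 0 l.

Definition is_debt (k : contract) : bool :=
  match kind k with Debt => true | CDS _ => false end.

Definition wf_contract (S : system) (k : contract) : Prop :=
  (debtor k < nbanks S)%nat /\ (creditor k < nbanks S)%nat /\
  debtor k <> creditor k /\ 0 < weight k /\
  (1 <= prio k <= nprio S)%nat /\
  match kind k with
  | Debt => True
  | CDS w => (w < nbanks S)%nat /\ w <> debtor k /\ w <> creditor k
  end.

Definition wf_system (S : system) : Prop :=
  (1 <= nprio S)%nat /\
  (forall v, (v < nbanks S)%nat -> 0 <= ext S v) /\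
  (forall k, In k (contracts S) -> wf_contract S k) /\
  (forall k w, In k (contracts S) -> kind k = CDS w ->
     exists k', In k' (contracts S) /\ kind k' = Debt /\ debtor k' = w /\ 0 < weight k').

Definition base_model (S : system) : Prop := nprio S = 1%nat.

Definition liab (r : nat -> R) (k : contract) : R :=
  match kind k with
  | Debt => weight k
  | CDS w => weight k * (1 - r w)
  end.

Definition debts_of (S : system) (v : nat) : list contract :=
  filter (fun k => Nat.eqb (debtor k) v) (contracts S).

Definition credits_of (S : system) (v : nat) : list contract :=
  filter (fun k => Nat.eqb (creditor k) v) (contracts S).

Definition liab_bank (S : system) (r : nat -> R) (v : nat) : R :=
  sumR (map (liab r) (debts_of S v)).

Definition liab_prio (S : system) (r : nat -> R) (v rho : nat) : R :=
  sumR (map (liab r) (filter (fun k => Nat.eqb (prio k) rho) (debts_of S v))).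

Fixpoint liab_upto (Sys : system) (r : nat -> R) (v rho : nat) : R :=
  match rho with
  | O => 0
  | Datatypes.S i => liab_upto Sys r v i + liab_prio Sys r v (Datatypes.S i)
  end.

Definition payment (S : system) (r : nat -> R) (k : contract) : R :=
  let v := debtor k in
  let rho := prio k in
  let lp := liab_prio S r v rho in
  if Req_EM_T lp 0 then 0
  else liab r k *
       Rmin 1 (Rmax 0 ((r v * liab_bank S r v - liab_upto S r v (rho - 1)) / lp)).

Definition assets (S : system) (r : nat -> R) (v : nat) : R :=
  ext S v + sumR (map (payment S r) (credits_of S v)).

Definition is_solution (S : system) (r : nat -> R) : Prop :=
  forall v, (v < nbanks S)%nat ->
    0 <= r v <= 1 /\
    (assets S r v >= liab_bank S r v -> r v = 1) /\
    (assets S r v < liab_bank S r v -> r v = assets S r v / liab_bank S r v).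

(* r is the unique solution (vectors are compared on the bank indices) *)
Definition unique_solution (S : system) (r : nat -> R) : Prop :=
  is_solution S r /\
  forall r', is_solution S r' -> forall v, (v < nbanks S)%nat -> r' v = r v.

Definition payoff (S : system) (r : nat -> R) (v : nat) : R :=
  Rmax (assets S r v - liab_bank S r v) 0.

Definition add_ext (S : system) (u : nat) (x : R) : system :=
  mkSystem (nbanks S)
           (fun w => if Nat.eqb w u then ext S u + x else ext S w)
           (nprio S) (contracts S).

(* Bank 1 has sold protection on bank 0 to bank 2: it owes bank 2 a CDS of
   weight 2 on bank 0, and bank 0 owes bank 2 a debt of 1. Bank 0 has
   external assets x < 1, so its recovery rate is x, and bank 1's liability
   is 2 (1 - x), which it can always pay from its external assets 2. Its
   payoff is therefore 2 x: giving bank 0 an extra x > 0 raises bank 1's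
   payoff by 2 x, which exceeds the injected amount. *)
From Stdlib Require Import Reals List Lra Lia FunctionalExtensionality.
Import ListNotations.
Open Scope R_scope.

Lemma payment_ge0 S r k : 0 <= liab r k -> 0 <= payment S r k.
Proof.
  intro Hl; unfold payment; destruct Req_EM_T; [lra|].
  apply Rmult_le_pos; [exact Hl|].
  apply Rmin_glb; [lra | apply Rmax_l].
Qed.

Lemma add_ext_0 S u : add_ext S u 0 = S.
Proof.
  destruct S as [n e p cs]; unfold add_ext; simpl; f_equal.
  apply functional_extensionality; intro w.
  destruct (Nat.eqb_spec w u) as [->|_]; lra.
Qed.

Definition cds_debt := mkContract 0 2 1 Debt 1.
Definition cds_swap := mkContract 1 2 2 (CDS 0) 1.
Definition cds_example :=
  mkSystem 3 (fun i => if Nat.eqb i 1 then 2 else 0) 1 [cds_debt; cds_swap].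

Definition cds_clearing (x : R) : nat -> R :=
  fun i => if Nat.eqb i 0 then x else 1.

Lemma cds_example_wf : wf_system cds_example.
Proof.
  split; [simpl; lia|]; split; [|split].
  - intros v _; simpl; destruct (Nat.eqb v 1); lra.
  - intros k [<-|[<-|[]]]; unfold wf_contract; simpl; repeat split; lia || lra.
  - intros k w [<-|[<-|[]]]; simpl; intros Hk; inversion Hk; subst.
    exists cds_debt; simpl; repeat split; auto; lra.
Qed.

Section Injection.

Variable x : R.
Hypothesis Hx : 0 <= x < 1.

Let Sx := add_ext cds_example 0 x.

Lemma cds_payments_ge0 r :
  r 0%nat <= 1 -> 0 <= payment Sx r cds_debt /\ 0 <= payment Sx r cds_swap.
Proof.
  intro Hr; split; apply payment_ge0; unfold liab; simpl; lra.
Qed.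

Lemma cds_example_solution_iff r :
  is_solution Sx r <-> r 0%nat = x /\ r 1%nat = 1 /\ r 2%nat = 1.
Proof.
  split.
  - intro Hs.
    destruct (Hs 0%nat ltac:(simpl; lia)) as [[_ Hr0] [_ C0]].
    destruct (cds_payments_ge0 r Hr0) as [P1 P2].
    destruct (Hs 1%nat ltac:(simpl; lia)) as [_ [A1 _]].
    destruct (Hs 2%nat ltac:(simpl; lia)) as [_ [A2 _]].
    unfold assets, liab_bank, credits_of, debts_of, liab in *; simpl in *.
    assert (E0 : r 0%nat = x) by (rewrite C0 by lra; field).
    repeat split; [exact E0 | apply A1; rewrite E0; lra | apply A2; lra].
  - intros (E0 & E1 & E2) v Hv; simpl in Hv.
    destruct v as [|[|[|v]]]; try lia;
      unfold assets, liab_bank, credits_of, debts_of, liab in *; simpl in *.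
    + rewrite E0; repeat split; try lra; intros; try field; lra.
    + rewrite E1, E0; repeat split; lra.
    + destruct (cds_payments_ge0 r ltac:(lra)) as [P1 P2].
      rewrite E2; repeat split; intros; lra.
Qed.

Lemma cds_example_unique : unique_solution Sx (cds_clearing x).
Proof.
  split.
  - apply cds_example_solution_iff; repeat split.
  - intros r' Hs v Hv; apply cds_example_solution_iff in Hs as (E0 & E1 & E2).
    simpl in Hv; destruct v as [|[|[|v]]]; try lia; assumption.
Qed.

Lemma cds_example_payoff_seller : payoff Sx (cds_clearing x) 1 = 2 * x.
Proof.
  unfold payoff, assets, liab_bank, credits_of, debts_of, liab, cds_clearing, Sx; simpl.
  rewrite Rmax_left; lra.
Qed.

End Injection.

Theorem mainTheorem3 :
  exists (S : system) (u v : nat) (x : R) (r r' : nat -> R),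
    wf_system S /\ base_model S /\
    (u < nbanks S)%nat /\ (v < nbanks S)%nat /\ u <> v /\ 0 < x /\
    unique_solution S r /\
    unique_solution (add_ext S u x) r' /\
    payoff (add_ext S u x) r' v > payoff S r v + x.
Proof.
  exists cds_example, 0%nat, 1%nat, (1/2), (cds_clearing 0), (cds_clearing (1/2)).
  split; [exact cds_example_wf|].
  split; [reflexivity|].
  do 4 (split; [simpl; lia || lra|]).
  split; [rewrite <- (add_ext_0 cds_example 0); apply cds_example_unique; lra|].
  split; [apply cds_example_unique; lra|].
  rewrite <- (add_ext_0 cds_example 0) at 2.
  rewrite !cds_example_payoff_seller by lra.
  lra.
Qed.
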